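(* If all the nodes in the graph are given different identities, then the identity of the leader node will be uniquely defined by the high level algorithm.
   Context: A broadcast network is modeled as a connected graph G(V,E) with n nodes, reliable FIFO message delivery with arbitrary finite delays, no failures. The high level (fragment-level) leader election algorithm: nodes are partitioned into fragments each with a candidate; id(F) = (size, candidate identity) ordered lexicographically (by size, then identity); external edges are directed from the larger-id fragment to the smaller-id one. Initially every node is a size-1 fragment in state wait. A fragment with some outgoing edge waits; a fragment whose external edges are all incoming enters work, counts its size new_size after a finite positive delay, and compares with its maximal neighbor F': if new_size > X · size(F') (X > 1) it updates its size, all its external edges become outgoing, and it returns to wait; otherwise it joins F'. A fragment with no external edges is the leader. It has been shown that, with distinct node identities, the sequence of events of this algorithm does not depend on the state delays (waitdelay, workdelay). *)

From Stdlib Require Import Relations.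
From mathcomp Require Import all_boot all_order all_algebra.
Set Implicit Arguments. Unset Strict Implicit. Unset Printing Implicit Defensive.
Import Order.TTheory GRing.Theory Num.Theory.

(* A configuration is a pair (cand, sz):
   - cand v = the candidate node of the fragment containing v;
     the fragment of candidate c is [set v | cand v == c];
   - sz c  = the recorded size size(F) of the fragment whose candidate is c. *)

Local Open Scope ring_scope.

Section HighLevel.
Variables (V : finType) (e : rel V) (idn : V -> nat).
Variables (R : realFieldType) (X : R).

Definition config := ({ffun V -> V} * {ffun V -> nat})%type.

Definition init_config : config := ([ffun v => v], [ffun _ => 1%N]).

Definition is_cand (s : config) (c : V) : bool := s.1 c == c.

Definition fragment (s : config) (c : V) : {set V} := [set v | s.1 v == c].

(* id(F) = (size, candidate identity), ordered lexicographically: id_lt s c d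
   means id(fragment c) < id(fragment d) *)
Definition id_lt (s : config) (c d : V) : bool :=
  (s.2 c < s.2 d)%N || ((s.2 c == s.2 d) && (idn c < idn d)%N).

Definition neighbor (s : config) (c d : V) : Prop :=
  is_cand s c /\ is_cand s d /\ c <> d /\
  exists u v, e u v /\ s.1 u = c /\ s.1 v = d.

(* all external edges of fragment c are incoming: c has at least one neighbor
   and every neighbor has a larger id (edges go from larger to smaller id) *)
Definition all_incoming (s : config) (c : V) : Prop :=
  is_cand s c /\ (exists d, neighbor s c d) /\
  forall d, neighbor s c d -> id_lt s c d.

Definition max_neighbor (s : config) (c d : V) : Prop :=
  neighbor s c d /\ forall d', neighbor s c d' -> d' = d \/ id_lt s d' d.

(* one work phase of fragment c (the event of the algorithm) *)
Definition step (s s' : config) : Prop :=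
  exists c d, all_incoming s c /\ max_neighbor s c d /\
   let new_size := #|fragment s c| in
   ( ((new_size%:R : R) > X * (s.2 d)%:R /\
        s' = (s.1, [ffun v => if v == c then new_size else s.2 v]))
   \/ (~ ((new_size%:R : R) > X * (s.2 d)%:R) /\
        s' = ([ffun v => if s.1 v == c then d else s.1 v], s.2)) ).

(* configurations reachable from the initial one under arbitrary delays
   (any interleaving of work events) *)
Definition reachable (s : config) : Prop :=
  clos_refl_trans config step init_config s.

Definition leader (s : config) (c : V) : Prop :=
  is_cand s c /\ forall d, ~ neighbor s c d.

End HighLevel.

From Stdlib Require Import Relations.
From mathcomp Require Import all_boot all_order all_algebra.
Import Order.TTheory GRing.Theory Num.Theory.
From mathcomp Require Import zify.
Set Implicit Arguments. Unset Strict Implicit.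

(* A work event of a fragment c changes only the candidates of the nodes of c
   and the recorded size of c, and it depends only on c, its neighbours and
   their sizes.  Two fragments that can work in the same configuration are
   never adjacent, since each would need the larger id, so their two events
   commute: the step relation has the diamond property and is therefore
   confluent.  In a connected graph a leader configuration is a single
   fragment in which no event is enabled, so any two reachable leader
   configurations have a common successor, hence coincide. *)

Section Confluence.

Variables (A : Type) (r : relation A).
Local Notation rt := (clos_refl_trans A r).

Hypothesis r_diamond :
  forall s a b, r s a -> r s b -> a = b \/ exists2 t, r a t & r b t.

Lemma rt_strip s a b : r s a -> rt s b -> exists2 t, rt a t & rt b t.
Proof.
move=> r_sa /clos_rt_rt1n_iff rt_sb.
elim: rt_sb a r_sa => [x|x y z r_xy rt_yz IH] a r_xa.
  by exists a; [apply: rt_refl | apply: rt_step].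
case: (r_diamond r_xa r_xy) => [->|[t r_at r_yt]].
  by exists z; [apply/clos_rt_rt1n_iff | apply: rt_refl].
have [u rt_tu rt_zu] := IH _ r_yt.
by exists u => //; apply: rt_trans (rt_step _ _ _ _ r_at) rt_tu.
Qed.

Lemma rt_confluent s a b : rt s a -> rt s b -> exists2 t, rt a t & rt b t.
Proof.
move=> /clos_rt_rt1n_iff rt_sa.
elim: rt_sa b => [x|x y z r_xy _ IH] b rt_xb.
  by exists b => //; apply: rt_refl.
have [t rt_yt rt_bt] := rt_strip r_xy rt_xb.
have [u rt_zu rt_tu] := IH _ rt_yt.
by exists u => //; apply: rt_trans rt_bt rt_tu.
Qed.

Lemma rt_normal_form s t : (forall u, ~ r s u) -> rt s t -> t = s.
Proof.
move=> s_nf /clos_rt_rt1n_iff rt_st.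
by case: rt_st => // y z /s_nf.
Qed.

End Confluence.

Section HighLevel.

Variables (V : finType) (e : rel V) (idn : V -> nat).
Variables (R : realFieldType) (X : R).
Hypothesis e_sym : symmetric e.

Implicit Types (s : config V) (c d : V).

Definition grows s c d : bool := (X * (s.2 d)%:R < #|fragment s c|%:R)%R.

Definition grow s c : config V :=
  (s.1, [ffun v => if v == c then #|fragment s c| else s.2 v]).

Definition merge_into s c d : config V :=
  ([ffun v => if s.1 v == c then d else s.1 v], s.2).

Definition work s c d : config V :=
  if grows s c d then grow s c else merge_into s c d.

Lemma stepP s s' :
  step e idn X s s' <->
  exists c d, [/\ all_incoming e idn s c, max_neighbor e idn s c d
                & s' = work s c d].
Proof.
rewrite /work /grows; split=> [[c [d [inc [mx ev]]]]|[c [d [inc mx ->]]]].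
  exists c, d; split=> //.
  by case: ev => [[g ->]|[/negP/negbTE g ->]]; rewrite g.
exists c, d; do 2!split=> //.
by case: ifP => g; [left | right; split=> //; apply/negP; rewrite g].
Qed.

Lemma id_lt_asym s c d : id_lt idn s c d -> id_lt idn s d c -> False.
Proof.
by rewrite /id_lt => /orP[?|/andP[/eqP ? ?]] /orP[?|/andP[/eqP ? ?]]; lia.
Qed.

Lemma neighbor_sym s c d : neighbor e s c d -> neighbor e s d c.
Proof.
case=> [cc [cd [neq [u [v [euv [uc vd]]]]]]]; do 3!split=> //.
  by move=> dc; apply: neq.
by exists v, u; rewrite e_sym.
Qed.

Lemma max_neighbor_uniq s c d d' :
  max_neighbor e idn s c d -> max_neighbor e idn s c d' -> d = d'.
Proof.
move=> [nd maxd] [nd' maxd'].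
case: (maxd _ nd') => [->//|lt1]; case: (maxd' _ nd) => [->//|lt2].
by case: (id_lt_asym lt1 lt2).
Qed.

Lemma all_incoming_not_adjacent s c c' :
  all_incoming e idn s c -> all_incoming e idn s c' -> ~ neighbor e s c c'.
Proof.
move=> [_ [_ inc]] [_ [_ inc']] n.
exact: id_lt_asym (inc _ n) (inc' _ (neighbor_sym n)).
Qed.

Definition unaffected s s' c :=
  [/\ is_cand s' c,
      forall x, neighbor e s' c x <-> neighbor e s c x,
      forall x, neighbor e s c x -> s'.2 x = s.2 x,
      s'.2 c = s.2 c
    & fragment s' c = fragment s c].

Lemma unaffected_enabled s s' c d :
  unaffected s s' c -> all_incoming e idn s c -> max_neighbor e idn s c d ->
  [/\ all_incoming e idn s' c, max_neighbor e idn s' c d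
    & grows s' c d = grows s c d].
Proof.
move=> [cc nE szE szcE frE] [_ [[x nx] inc]] [nd maxd].
have ltE y z : neighbor e s c y -> neighbor e s c z ->
  id_lt idn s' y z = id_lt idn s y z.
  by move=> ny nz; rewrite /id_lt !szE.
have ltcE y : neighbor e s c y -> id_lt idn s' c y = id_lt idn s c y.
  by move=> ny; rewrite /id_lt szcE szE.
split.
- split=> //; split; first by exists x; apply/nE.
  by move=> y /nE ny; rewrite ltcE //; apply: inc.
- split=> [|y /nE ny]; first exact/nE.
  by case: (maxd _ ny) => [->|lt]; [left | right; rewrite ltE].
- by rewrite /grows frE szE.
Qed.

Lemma grow_unaffected s c c' :
  c' <> c -> is_cand s c' -> ~ neighbor e s c' c -> unaffected s (grow s c) c'.
Proof.
move=> c'c cc' nc'c; split=> //= [x nx|]; rewrite ffunE.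
  by case: eqP => // xc; case: nc'c; rewrite -xc.
by case: eqP.
Qed.

Lemma merge_into_unaffected s c c' d :
  c' <> c -> is_cand s c' -> ~ neighbor e s c' c -> neighbor e s c d ->
  d <> c' -> unaffected s (merge_into s c d) c'.
Proof.
move=> c'c cc' nc'c [cc [cd _]] dc'.
have candE v : (merge_into s c d).1 v = if s.1 v == c then d else s.1 v.
  by rewrite ffunE.
have inc'E u : ((merge_into s c d).1 u == c') = (s.1 u == c').
  rewrite candE; case: (s.1 u =P c) => [->|//].
  by apply/eqP/eqP=> [/dc'|uc'] //; case: c'c.
have cand'E x : x <> c -> is_cand (merge_into s c d) x = is_cand s x.
  move=> xc; rewrite /is_cand candE; case: ifP => // /eqP xc'.
  rewrite xc' (introF eqP (nesym xc)); apply/eqP => dx; apply: xc.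
  by rewrite -xc' -dx (eqP cd).
have not_adj_c u v : e u v -> s.1 u = c' -> s.1 v <> c.
  by move=> euv uc' vc; apply: nc'c; do 3!split=> //; exists u, v.
split=> //.
- by rewrite cand'E.
- move=> x; split=> -[_ [cx [c'x [u [v [euv [uc' vx]]]]]]].
  + have {}uc' : s.1 u = c' by apply/eqP; rewrite -inc'E uc'.
    have vc := not_adj_c _ _ euv uc'.
    have {}vx : s.1 v = x by rewrite -vx candE (introF eqP vc).
    have xc : x <> c by rewrite -vx.
    split=> //; rewrite -(cand'E _ xc); split=> //.
    by split=> //; exists u, v.
  + have xc : x <> c by rewrite -vx; apply: not_adj_c euv uc'.
    split; first by rewrite cand'E.
    split; first by rewrite cand'E.
    split=> //; exists u, v; split=> //.
    split; first by apply/eqP; rewrite inc'E uc'.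
    by rewrite candE vx (introF eqP xc).
- by apply/setP => v; rewrite !inE inc'E.
Qed.

Lemma max_neighbor_not_incoming s c d c' :
  all_incoming e idn s c -> max_neighbor e idn s c d ->
  all_incoming e idn s c' -> d <> c'.
Proof.
move=> inc [nd _] inc' dc'.
by apply: (all_incoming_not_adjacent inc inc'); rewrite -dc'.
Qed.

Lemma work_unaffected s c d c' :
  c' <> c -> all_incoming e idn s c -> max_neighbor e idn s c d ->
  all_incoming e idn s c' -> unaffected s (work s c d) c'.
Proof.
move=> c'c inc mx inc'.
have nc'c := all_incoming_not_adjacent inc' inc.
rewrite /work; case: ifP => _; first exact: grow_unaffected inc'.1 nc'c.
have dc' := max_neighbor_not_incoming inc mx inc'.
exact: merge_into_unaffected inc'.1 nc'c mx.1 dc'.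
Qed.

Lemma fragment_grow s c c' : fragment (grow s c) c' = fragment s c'.
Proof. by []. Qed.

Lemma grow_comm s c c' : c <> c' -> grow (grow s c) c' = grow (grow s c') c.
Proof.
move=> cc'; rewrite /grow !fragment_grow; congr (_, _).
apply/ffunP => v; rewrite !ffunE.
case: (v =P c) => [->|_]; last by [].
by rewrite (introF eqP cc').
Qed.

Lemma fragment_merge_into s c d c' :
  c' <> c -> d <> c' -> fragment (merge_into s c d) c' = fragment s c'.
Proof.
move=> c'c dc'; apply/setP => v; rewrite !inE ffunE.
case: (s.1 v =P c) => [->|//].
by rewrite (introF eqP dc') (introF eqP (nesym c'c)).
Qed.

Lemma merge_into_grow s c d c' :
  c' <> c -> d <> c' -> merge_into (grow s c') c d = grow (merge_into s c d) c'.
Proof. by move=> c'c dc'; rewrite /grow fragment_merge_into. Qed.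

Lemma merge_into_comm s c d c' d' :
  c <> c' -> d <> c' -> d' <> c ->
  merge_into (merge_into s c d) c' d' = merge_into (merge_into s c' d') c d.
Proof.
move=> cc' dc' d'c; congr (_, _); apply/ffunP => v; rewrite !ffunE.
have [->|vc] := eqVneq (s.1 v) c.
  by rewrite (introF eqP dc') (introF eqP cc') eqxx.
have [_|_] := eqVneq (s.1 v) c'; first by rewrite (introF eqP d'c).
by rewrite (negbTE vc).
Qed.

Lemma work_comm s c d c' d' :
  c <> c' -> all_incoming e idn s c -> max_neighbor e idn s c d ->
  all_incoming e idn s c' -> max_neighbor e idn s c' d' ->
  work (work s c d) c' d' = work (work s c' d') c d.
Proof.
move=> cc' inc mx inc' mx'.
have [_ _ g'E] :=
  unaffected_enabled (work_unaffected (nesym cc') inc mx inc') inc' mx'.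
have [_ _ gE] :=
  unaffected_enabled (work_unaffected cc' inc' mx' inc) inc mx.
have dc' := max_neighbor_not_incoming inc mx inc'.
have d'c := max_neighbor_not_incoming inc' mx' inc.
rewrite [LHS]/work g'E [RHS]/work gE /work.
case: (grows s c d); case: (grows s c' d').
- exact: grow_comm.
- exact: merge_into_grow.
- exact: esym (merge_into_grow _ (nesym cc') dc').
- exact: merge_into_comm.
Qed.

Lemma step_diamond s a b :
  step e idn X s a -> step e idn X s b ->
  a = b \/ exists2 t, step e idn X a t & step e idn X b t.
Proof.
move=> /stepP[c [d [inc mx ->]]] /stepP[c' [d' [inc' mx' ->]]].
case: (c =P c') => [ecc'|cc'].
  by left; subst c'; rewrite (max_neighbor_uniq mx mx').
have [en' mx'_a _] :=
  unaffected_enabled (work_unaffected (nesym cc') inc mx inc') inc' mx'.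
have [en mx_b _] :=
  unaffected_enabled (work_unaffected cc' inc' mx' inc) inc mx.
right; exists (work (work s c d) c' d'); apply/stepP.
  by exists c', d'.
by exists c, d; rewrite (work_comm cc').
Qed.

Definition cand_idem s : Prop := forall v, s.1 (s.1 v) = s.1 v.

Lemma step_cand_idem s s' :
  cand_idem s -> step e idn X s s' -> cand_idem s'.
Proof.
move=> idem /stepP[c [d [_ [[_ [cd [cd_neq _]]] _] ->]]].
rewrite /work; case: ifP => // _ v; rewrite !ffunE.
case: (s.1 v =P c) => [_|vc]; last by rewrite idem (introF eqP vc).
by rewrite (eqP cd) (introF eqP (nesym cd_neq)).
Qed.

Lemma reachable_cand_idem s : reachable e idn X s -> cand_idem s.
Proof.
move/clos_rt_rtn1_iff; elim=> [v|s' s'' step_s' _ idem].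
  by rewrite !ffunE.
exact: step_cand_idem idem step_s'.
Qed.

Hypothesis e_connected : forall x y : V, connect e x y.

Lemma leader_cand s c : cand_idem s -> leader e s c -> forall v, s.1 v = c.
Proof.
move=> idem [cc no_nb].
have closed_c : closed e [pred v | s.1 v == c].
  apply: (intro_closed (sym_connect_sym e_sym)) => u v euv.
  rewrite !inE => /eqP uc; apply/eqP; case: (s.1 v =P c) => // vc.
  case: (no_nb (s.1 v)); split=> //; split; first exact/eqP/idem.
  by split; [exact: nesym vc | exists u, v].
move=> v; have := closed_connect closed_c (e_connected c v).
by rewrite !inE (eqP cc) eqxx => /esym/eqP.
Qed.

Lemma leader_no_step s c :
  cand_idem s -> leader e s c -> forall s', ~ step e idn X s s'.
Proof.
move=> idem ldr s' /stepP[c' [d [[cc' [[x nx] _]] _ _]]].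
have c'c : c' = c by rewrite -(leader_cand idem ldr c') (eqP cc').
by case: ldr => _ no_nb; apply: (no_nb x); rewrite -c'c.
Qed.

End HighLevel.

Theorem corollary1 (V : finType) (e : rel V) (idn : V -> nat)
  (R : realFieldType) (X : R) :
  (1 < X)%R ->
  symmetric e ->
  (forall x y : V, connect e x y) ->
  injective idn ->
  forall (s1 s2 : config V) (c1 c2 : V),
    reachable e idn X s1 -> leader e s1 c1 ->
    reachable e idn X s2 -> leader e s2 c2 ->
    idn c1 = idn c2.
Proof.
move=> _ e_sym e_conn _ s1 s2 c1 c2 reach1 ldr1 reach2 ldr2.
have idem1 := reachable_cand_idem reach1.
have idem2 := reachable_cand_idem reach2.
have [t rt1 rt2] := rt_confluent (step_diamond e_sym) reach1 reach2.
have t1 := rt_normal_form (leader_no_step e_sym e_conn idem1 ldr1) rt1; subst t.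
have s12 := rt_normal_form (leader_no_step e_sym e_conn idem2 ldr2) rt2.
subst s2.
by rewrite -(leader_cand e_sym e_conn idem1 ldr1 c2) (eqP (proj1 ldr2)).
Qed.
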